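(* In the setting below (the extended process built from a semi-Markov process satisfying conditions (i)–(v)), for each $1\le i\le\overline M$ there is a function $\overline\tau^\varepsilon_i$ such that $\lim_{\varepsilon\to0}\mathbb E\big(\overline T^\varepsilon(\bar x,\overline S_j)\big)/\overline\tau^\varepsilon_i=1$ uniformly in $\bar x\in\overline S_i$ for every $1\le j\le\overline M$ with $\overline P^\varepsilon_{ij}\not\equiv0$. Moreover there are $C,\varepsilon_0>0$ such that $\mathrm{Var}\big(\overline T^\varepsilon(\bar x,\overline S_j)\big)\le C(\overline\tau^\varepsilon_i)^2$ for every $\varepsilon\le\varepsilon_0$ (and $\bar x\in\overline S_i$), provided $\overline P^\varepsilon_{ij}\not\equiv0$.
   Context: $S$ is a metric space partitioned into disjoint Borel sets $S_1,\dots,S_M$; for $\varepsilon>0$, $Q^\varepsilon$ is a Markov kernel from $S$ to $S\times[0,\infty)$, $P^\varepsilon(x,B)=Q^\varepsilon(x,B\times[0,\infty))$, and for $P^\varepsilon(x,B)>0$, $T^\varepsilon(x,B)$ has law $\mathbb P(T^\varepsilon(x,B)\le t)=Q^\varepsilon(x,B\times[0,t])/P^\varepsilon(x,B)$. Assumptions: (i) $P^\varepsilon(x,S_i)=0$ for $x\in S_i$. (ii) For $i\ne j$, either $P^\varepsilon(x,S_j)=0$ for all $x\in S_i,\varepsilon$ (set $P^\varepsilon_{ij}\equiv0$) or it is positive for all $x\in S_i,\varepsilon$ and there are positive $P^\varepsilon_{ij}$ with $P^\varepsilon(x,S_j)/P^\varepsilon_{ij}\to1$ uniformly in $x\in S_i$;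 $\sum_{j\ne i}P^\varepsilon_{ij}=1$. (iii) communication: for $i\ne j$ a chain $i=i_1,\dots,i_k=j$ with $P^\varepsilon_{i_ri_{r+1}}>0$. (iv) For $P^\varepsilon_{ij}\not\equiv0$ there are $\tau^\varepsilon_{ij}$ with $\mathbb ET^\varepsilon(x,S_j)/\tau^\varepsilon_{ij}\to1$ uniformly in $x\in S_i$. (v) There are $C,\varepsilon_0$ with $\mathrm{Var}\,T^\varepsilon(x,S_j)\le C(\tau^\varepsilon_{ij})^2$ for $\varepsilon\le\varepsilon_0$, $x\in S_i$. Extended process: $\overline S=\{(x,j):x\in S_i,\ 1\le i,j\le M,\ P^\varepsilon_{ij}\not\equiv0\}$, with kernel $\overline Q^\varepsilon((x,j),(A\times\{k\})\times I)=\frac{1}{P^\varepsilon(x,S_j)}\int_{A\cap S_j}P^\varepsilon(y,S_k)\,Q^\varepsilon(x,dy\times I)$ for Borel $A\subseteq S$, $I\subseteq[0,\infty)$. $\overline S$ is partitioned into the sets $S_a\times\{b\}$ (with $P^\varepsilon_{ab}\not\equiv0$), re-indexed as $\overline S_1,\dots,\overline S_{\overline M}$. $\overline P^\varepsilon(\bar x,B)=\overline Q^\varepsilon(\bar x,B\times[0,\infty))$ and $\overline T^\varepsilon(\bar x,B)$ has law $\overline Q^\varepsilon(\bar x,B\times\cdot)/\overline P^\varepsilon(\bar x,B)$. If $\overline S_i=S_a\times\{b\}$ and $\overline S_j=S_c\times\{d\}$, set $\overline P^\varepsilon_{ij}=P^\varepsilon_{cd}$ if $b=c$ and $\overline P^\varepsilon_{ij}\equiv0$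 otherwise. *)

From HB Require Import structures.
From mathcomp Require Import all_boot all_order all_algebra.
From mathcomp Require Import all_classical all_reals all_analysis.
Set Implicit Arguments. Unset Strict Implicit. Unset Printing Implicit Defensive.
Import Order.TTheory GRing.Theory Num.Theory.
Import numFieldNormedType.Exports.
Local Open Scope classical_set_scope.
Local Open Scope ring_scope.

Section semi_markov_defs.
Context (d : measure_display) (S : measurableType d) (R : realType).

(* Q^eps(x, .) : a Markov kernel from S to S x [0,oo), modelled as a
   probability kernel into S x R (time marginal supported in [0,oo), see
   the hypothesis in the statement).  The argument eps is a real. *)

Definition Pk (Q : R -> R.-pker S ~> (S * R)%type) (eps : R) (x : S)
  (B : set S) : R := fine (Q eps x (B `*` setT)).

(* Generic "law with density": given the kernel measure mu = Q^eps(x,.) and a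
   weight w : S -> R, the measure  I |-> \int_{y, t in I} w y  mu(dy,dt)
   on times.  Its total mass, its first moment and its central second moment
   (the random time has the normalised law I |-> m(I)/m([0,oo))). *)
Definition wmass (mu : {measure set (S * R)%type -> \bar R}) (w : S -> R) : \bar R :=
  \int[mu]_(z in setT) (w z.1)%:E.

Definition wmean (mu : {measure set (S * R)%type -> \bar R}) (w : S -> R)
  : \bar R :=
  (((fine (wmass mu w))^-1)%:E * \int[mu]_(z in setT) (w z.1 * z.2)%:E)%E.

Definition wvar (mu : {measure set (S * R)%type -> \bar R}) (w : S -> R)
  : \bar R :=
  if wmean mu w \is a fin_num then
    (((fine (wmass mu w))^-1)%:E *
      \int[mu]_(z in setT) (w z.1 * (z.2 - fine (wmean mu w)) ^+ 2)%:E)%E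
  else +oo%E.

(* E T^eps(x,B) and Var T^eps(x,B): the law of T^eps(x,B) is
   Q^eps(x, B x .)/P^eps(x,B), i.e. weight = indicator of B. *)
Definition ET (Q : R -> R.-pker S ~> (S * R)%type) (eps : R) (x : S) (B : set S) :=
  wmean (Q eps x) (\1_B).
Definition VarT (Q : R -> R.-pker S ~> (S * R)%type) (eps : R) (x : S) (B : set S) :=
  wvar (Q eps x) (\1_B).

(* Extended process: from state (x,b), the kernel is
   Qbar((x,b),(A x {k}) x I) = 1/P(x,S_b) \int_{A cap S_b} P(y,S_k) Q(x,dy x I),
   so the law of Tbar((x,b), S_c x {k}) has, w.r.t. Q^eps(x,.), the weight
   y |-> 1/P(x,S_b) * 1_{S_c cap S_b}(y) * P(y,S_k). *)
Definition wbar (M : nat) (Q : R -> R.-pker S ~> (S * R)%type)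
  (S_ : 'I_M -> set S) eps (x : S) (b c k : 'I_M) : S -> R :=
  fun y => (Pk Q eps x (S_ b))^-1 * \1_(S_ c `&` S_ b) y * Pk Q eps y (S_ k).

Definition ETbar (M : nat) (Q : R -> R.-pker S ~> (S * R)%type) (S_ : 'I_M -> set S) (eps : R) (x : S) (b c k : 'I_M) :=
  wmean (Q eps x) (wbar Q S_ eps x b c k).
Definition VarTbar (M : nat) (Q : R -> R.-pker S ~> (S * R)%type) (S_ : 'I_M -> set S) (eps : R) (x : S) (b c k : 'I_M) :=
  wvar (Q eps x) (wbar Q S_ eps x b c k).

End semi_markov_defs.

Definition unif_ratio_to1 {T : Type} {R : realType}
  (f : R -> T -> \bar R) (g : R -> R) (A : set T) : Prop :=
  forall e : R, 0 < e -> exists delta : R, 0 < delta /\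
    forall eps : R, 0 < eps -> eps < delta -> forall x, A x ->
      f eps x \is a fin_num /\ `| fine (f eps x) / g eps - 1 | < e.

Definition unif_ratio_to1R {T : Type} {R : realType}
  (f : R -> T -> R) (g : R -> R) (A : set T) : Prop :=
  forall e : R, 0 < e -> exists delta : R, 0 < delta /\
    forall eps : R, 0 < eps -> eps < delta -> forall x, A x ->
      `| f eps x / g eps - 1 | < e.

Definition nz {R : realType} {M : nat} (Pm : R -> 'I_M -> 'I_M -> R)
  (i j : 'I_M) : Prop :=
  i <> j /\ ~ (forall eps : R, 0 < eps -> Pm eps i j = 0).

From HB Require Import structures.
From mathcomp Require Import all_boot all_order all_algebra.
From mathcomp Require Import all_classical all_reals all_analysis measurable_realfun.
From mathcomp Require Import ring lra.
Set Implicit Arguments. Unset Strict Implicit. Unset Printing Implicit Defensive.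
Import Order.TTheory GRing.Theory Num.Theory.
Import numFieldNormedType.Exports.
Local Open Scope classical_set_scope.
Local Open Scope ring_scope.

(* From x in S_a x {b}, the extended process makes the same jump as the
   original one from x into S_b, but weighted by the probability P(y, S_k) of
   the next jump from the landing point y.  By (ii) this weight is uniformly
   within a factor 1 +- del of the constant P_bk on S_b, so the holding-time law
   of the extended process is squeezed between (1 +- del) times a constant
   multiple of the law of T(x, S_b).  For two such comparable weights the
   normalised first moments agree up to (1 + del)/(1 - del), and the second
   moments about the respective means satisfy Var' <= 2 (1 + del)/(1 - del) Var
   + 2 (m - m')^2.  Hence taubar_(a,b) := tau_ab works, and the finiteness of
   the index set makes the constants uniform. *)

Section ratio_arith.
Variable R : realFieldType.
Implicit Types L U p q i j k m tau del t a b c v : R.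

Lemma ratio_sandwich L U p q i j : 0 < L -> 0 < p -> 0 < q -> 0 <= i ->
  L * p <= q <= U * p -> L * i <= j <= U * i ->
  L * (p^-1 * i) <= U * (q^-1 * j) /\ L * (q^-1 * j) <= U * (p^-1 * i).
Proof.
move=> L0 p0 q0 i0 /andP[Lpq qUp] /andP[Lij jUi].
have cross a b c e : 0 < c -> 0 < e -> a * e <= b * c -> c^-1 * a <= e^-1 * b.
  by move=> c0 e0; rewrite ler_pdivrMl // mulrCA ler_pdivlMl // mulrC [c * b]mulrC.
have Li0 : 0 <= L * i by rewrite mulr_ge0 // ltW.
have Up0 : 0 <= U * p by rewrite (le_trans _ qUp) // ltW.
by split; rewrite mulrCA [U * _]mulrCA; apply: cross => //; nra.
Qed.

Lemma sqr_sub_le t a b : (t - b) ^+ 2 <= 2 * (t - a) ^+ 2 + 2 * (a - b) ^+ 2.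
Proof. by have := sqr_ge0 (t - 2 * a + b); rewrite !expr2; lra. Qed.

Lemma normalized_dev_le L U p q v c k : 0 < L -> 0 < p -> 0 <= U -> 0 <= v ->
  L * p <= q -> k <= 2 * U * v + c * q ->
  q^-1 * k <= 2 * (U / L) * (p^-1 * v) + c.
Proof.
move=> L0 p0 U0 v0 Lpq kle.
have Lp0 : 0 < L * p by rewrite mulr_gt0.
have q0 : 0 < q := lt_le_trans Lp0 Lpq.
rewrite ler_pdivrMl // mulrDr [q * c]mulrC (le_trans kle) // lerD2r.
have -> : q * (2 * (U / L) * (p^-1 * v)) = q / (L * p) * (2 * U * v).
  by field; rewrite !gt_eqF.
by rewrite ler_peMl ?mulr_ge0 // ler_pdivlMr // mul1r.
Qed.

Lemma near1_bounds P g del : 0 < P -> `|g / P - 1| < del ->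
  P * (1 - del) <= g <= P * (1 + del).
Proof.
move=> P0; rewrite ltr_norml => /andP[lo hi].
have -> : g = g / P * P by rewrite mulfVK ?gt_eqF.
by set r := g / P in lo hi *; apply/andP; split; nra.
Qed.

Lemma near1_gt0 m tau del : 0 <= m -> del <= 1 -> `|m / tau - 1| < del -> 0 < tau.
Proof.
move=> m0 del1; case: (ltgtP tau 0) => // [tau_lt0|->]; last first.
  by rewrite invr0 mulr0 sub0r normrN normr1; lra.
have : m / tau <= 0 by rewrite mulr_ge0_le0 // ltW // invr_lt0.
by rewrite ltr_norml; lra.
Qed.

Lemma comparable_near1 del m m' tau : 0 < del -> 8 * del <= 1 -> 0 <= m ->
  (1 - del) * m <= (1 + del) * m' -> (1 - del) * m' <= (1 + del) * m ->
  `|m / tau - 1| < del -> `|m' / tau - 1| < 8 * del.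
Proof.
move=> del0 del8 m0 m_m' m'_m near_m.
have tau0 : 0 < tau by apply: near1_gt0 near_m => //; lra.
have tauV0 : 0 <= tau^-1 by rewrite invr_ge0 ltW.
move: (ler_wpM2r tauV0 m_m') (ler_wpM2r tauV0 m'_m) near_m; rewrite -!mulrA.
set r := m / tau; set r' := m' / tau.
by rewrite !ltr_norml => ? ? /andP[? ?]; apply/andP; split; nra.
Qed.

Lemma sqr_sub_le_comparable del m m' tau : 0 < del -> 2 * del <= 1 -> 0 <= m ->
  (1 - del) * m <= (1 + del) * m' -> (1 - del) * m' <= (1 + del) * m ->
  `|m / tau - 1| < del -> (m - m') ^+ 2 <= 9 * tau ^+ 2.
Proof.
move=> del0 del2 m0 m_m' m'_m near_m.
have tau0 : 0 < tau by apply: near1_gt0 near_m => //; lra.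
have m_le : 2 * m <= 3 * tau.
  move: near_m; rewrite ltr_norml => /andP[_].
  by rewrite ltrBlDr ltr_pdivrMr //; nra.
have m'0 : 0 <= m' by nra.
have m'_le : m' <= 3 * m by nra.
rewrite !expr2; nra.
Qed.

Lemma finite_uniform_bound (I : finType) (P : I -> R -> R -> Prop) :
  (forall s C C' e e', C <= C' -> 0 < e' -> e' <= e -> P s C e -> P s C' e') ->
  (forall s, exists C e, 0 < C /\ 0 < e /\ P s C e) ->
  exists C e, 0 < C /\ 0 < e /\ forall s, P s C e.
Proof.
move=> P_mono /fin_all_exists[C_ /fin_all_exists[e_ PCe]].
have e_gt0 : 0 < \big[Num.min/1]_i e_ i.
  by apply: lt_bigmin => // i _; case: (PCe i) => _ [].
exists (\big[Num.max/1]_i C_ i), (\big[Num.min/1]_i e_ i); split.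
  by elim/big_rec: _ => // i x _ x_gt0; rewrite lt_max x_gt0 orbT.
split=> // s; case: (PCe s) => _ [_ Ps].
by apply: (P_mono s (C_ s) _ (e_ s) _ _ e_gt0 _ Ps); [exact: le_bigmax | exact: bigmin_le].
Qed.

End ratio_arith.

Section weighted_moments.
Context d (T : measurableType d) (R : realType).
Variable mu : {measure set (T * R)%type -> \bar R}.
Implicit Types (B : set T) (w : T -> R) (h : R -> R).

Lemma measurable_weight_time w h : measurable_fun setT w -> measurable_fun setT h ->
  measurable_fun setT (fun z : T * R => (w z.1 * h z.2)%:E).
Proof.
move=> mw mh; apply/measurable_EFinP/measurable_funM.
- exact: measurableT_comp mw measurable_fst.
- exact: measurableT_comp mh measurable_snd.
Qed.

Lemma measurable_weight w : measurable_fun setT w ->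
  measurable_fun setT (fun z : T * R => (w z.1)%:E).
Proof. by move=> mw; apply/measurable_EFinP; exact: measurableT_comp mw measurable_fst. Qed.

Lemma wmassE w : wmass mu w = (\int[mu]_(z in setT) (w z.1 * cst 1 z.2)%:E)%E.
Proof. by apply: eq_integral => z _; rewrite mulr1. Qed.

Lemma wmass_indic B : measurable B -> wmass mu \1_B = mu (B `*` setT).
Proof.
move=> mB; rewrite -[in RHS](setIT (B `*` setT)) -integral_indic //; last exact: measurableX.
by apply: eq_integral => -[y t] _; rewrite !indicE in_setX in_setT andbT.
Qed.

Hypothesis mu_time_ge0 : mu (setT `*` `]-oo, 0[) = 0%E.

(* Times are a.e. nonnegative, so first moments are integrals of nonnegative
   functions. *)
Lemma integral_weight_time_max0 w : measurable_fun setT w ->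
  (\int[mu]_(z in setT) (w z.1 * z.2)%:E
   = \int[mu]_(z in setT) (w z.1 * Num.max z.2 0)%:E)%E.
Proof.
move=> mw; have mid := @measurable_id _ R setT.
apply: ae_eq_integral => //.
- exact: (measurable_weight_time (h := id) mw mid).
- exact: (measurable_weight_time (h := fun t => Num.max t 0) mw
           (measurable_maxr mid (measurable_cst (0 : R)))).
exists (setT `*` `]-oo, 0[); split; [exact: measurableX | by [] |].
move=> [y t] /= t_max; split => //; rewrite in_itv /= ltNge; apply/negP => t0.
by apply: t_max => _; rewrite max_l.
Qed.

Section sandwich.
Variables (B : set T) (w : T -> R) (L U : R).
Hypotheses (mB : measurable B) (mw : measurable_fun setT w).
Hypotheses (L0 : 0 < L) (LU : L <= U).
Hypothesis w_sandwich : forall y, L * \1_B y <= w y <= U * \1_B y.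

Let w_ge0 y : 0 <= w y.
Proof. by case/andP: (w_sandwich y) => + _; apply: le_trans; rewrite mulr_ge0 // ltW. Qed.

Lemma integral_weight_sandwich h : measurable_fun setT h -> (forall t, 0 <= h t) ->
  (L%:E * \int[mu]_(z in setT) (\1_B z.1 * h z.2)%:E
     <= \int[mu]_(z in setT) (w z.1 * h z.2)%:E
     <= U%:E * \int[mu]_(z in setT) (\1_B z.1 * h z.2)%:E)%E.
Proof.
move=> mh h0; have mIh := measurable_weight_time (measurable_indic (R := R) mB) mh.
have mwh := measurable_weight_time mw mh.
have U0 : 0 <= U := le_trans (ltW L0) LU.
rewrite -!ge0_integralZl_EFin ?(ltW L0) //; try by move=> z _; rewrite lee_fin mulr_ge0.
apply/andP; split; apply: ge0_le_integral => //.
- by move=> z _; apply: mule_ge0; rewrite lee_fin ?mulr_ge0 ?(ltW L0).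
- exact: emeasurable_funM.
- by move=> z _; rewrite -EFinM lee_fin mulrA ler_wpM2r //; case/andP: (w_sandwich z.1).
- by move=> z _; rewrite lee_fin mulr_ge0.
- exact: emeasurable_funM.
- by move=> z _; rewrite -EFinM lee_fin mulrA ler_wpM2r //; case/andP: (w_sandwich z.1).
Qed.

Lemma wmass_sandwich p : mu (B `*` setT) = p%:E ->
  exists2 q, wmass mu w = q%:E & L * p <= q <= U * p.
Proof.
move=> Bp; have /andP[] := integral_weight_sandwich (measurable_cst (1 : R)) (fun=> ler01).
rewrite -!wmassE wmass_indic // Bp -!EFinM => Lp_w w_Up.
have wmass_ge0 : (0 <= wmass mu w)%E by apply: integral_ge0 => z _; rewrite lee_fin.
have w_fin : wmass mu w \is a fin_num by rewrite ge0_fin_numE // (le_lt_trans w_Up) ?ltry.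
by exists (fine (wmass mu w)); rewrite ?fineK // -!lee_fin fineK // Lp_w w_Up.
Qed.

Lemma wmean_sandwich p m : mu (B `*` setT) = p%:E -> 0 < p -> wmean mu \1_B = m%:E ->
  exists2 m', wmean mu w = m'%:E & [/\ 0 <= m, L * m <= U * m' & L * m' <= U * m].
Proof.
move=> Bp p0 Em; have [q wq Lp_q_Up] := wmass_sandwich Bp.
have q0 : 0 < q by case/andP: Lp_q_Up => + _; apply: lt_le_trans; rewrite mulr_gt0.
have mI : measurable_fun setT (\1_B : T -> R) by exact: measurable_indic.
have mmax0 := measurable_maxr (@measurable_id _ R setT) (measurable_cst (0 : R)).
have max0_ge0 (t : R) : 0 <= Num.max t 0 by rewrite le_max lexx orbT.
have /andP[] := integral_weight_sandwich mmax0 max0_ge0.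
have time_ge0 (v : T -> R) : measurable_fun setT v -> (forall y, 0 <= v y) ->
    (0 <= \int[mu]_(z in setT) (v z.1 * z.2)%:E)%E.
  move=> mv v0; rewrite integral_weight_time_max0 //.
  by apply: integral_ge0 => z _; rewrite lee_fin mulr_ge0.
rewrite -!integral_weight_time_max0 //.
move: Em (time_ge0 _ mI (fun y => ler0n _ _)) (time_ge0 _ mw w_ge0).
rewrite /wmean wq wmass_indic // Bp /=.
set I1 := (\int[mu]_(z in setT) (\1_B z.1 * z.2)%:E)%E.
set J1 := (\int[mu]_(z in setT) (w z.1 * z.2)%:E)%E.
move=> Em I1_ge0 J1_ge0 LI_J J_UI.
have EI1 : I1 = (p * m)%:E by rewrite EFinM -Em muleA -EFinM mulfV ?gt_eqF // mul1e.
rewrite EI1 -EFinM in I1_ge0 LI_J J_UI.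
have J1_fin : J1 \is a fin_num by rewrite ge0_fin_numE // (le_lt_trans J_UI) ?ltry.
have LJU : L * (p * m) <= fine J1 <= U * (p * m) by rewrite -!lee_fin fineK // LI_J J_UI.
have pm0 : 0 <= p * m by rewrite -lee_fin.
exists (q^-1 * fine J1); first by rewrite EFinM fineK.
have [] := ratio_sandwich L0 p0 q0 pm0 Lp_q_Up LJU.
by rewrite mulKf ?gt_eqF // => ? ?; split; rewrite // -(pmulr_rge0 _ p0).
Qed.

Lemma integral_sqr_dev_sandwich a b :
  (\int[mu]_(z in setT) (w z.1 * (z.2 - b) ^+ 2)%:E
   <= (2 * U)%:E * \int[mu]_(z in setT) (\1_B z.1 * (z.2 - a) ^+ 2)%:E
      + (2 * (a - b) ^+ 2)%:E * wmass mu w)%E.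
Proof.
have msqr (e : R) : measurable_fun setT (fun t : R => (t - e) ^+ 2).
  by apply/measurable_funX/measurable_funD => //; exact: measurable_cst.
have mw1 := measurable_weight mw.
have mwsq (e : R) := measurable_weight_time mw (msqr e).
have wsq_ge0 (e : R) (z : T * R) : setT z -> (0 <= (w z.1 * (z.2 - e) ^+ 2)%:E)%E.
  by move=> _; rewrite lee_fin; apply: mulr_ge0; [exact: w_ge0 | exact: sqr_ge0].
set c := 2 * (a - b) ^+ 2.
have c0 : 0 <= c by rewrite mulr_ge0 ?sqr_ge0.
apply: (@le_trans _ _ (2%:E * (\int[mu]_(z in setT) (w z.1 * (z.2 - a) ^+ 2)%:E)
                       + c%:E * wmass mu w)%E); last first.
  rewrite leeD2r // EFinM -muleA; apply: lee_wpmul2l => //.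
  by case/andP: (integral_weight_sandwich (msqr a) (fun t => sqr_ge0 (t - a))).
rewrite /wmass -!ge0_integralZl_EFin -?ge0_integralD //.
all: try by move=> z Tz; rewrite ?(wsq_ge0 _ _ Tz) ?lee_fin ?w_ge0.
all: try by move=> z Tz; apply: mule_ge0; rewrite ?(wsq_ge0 _ _ Tz) ?lee_fin ?w_ge0.
all: try by apply: emeasurable_funM => //; exact: (mwsq a).
apply: ge0_le_integral => //; first exact: wsq_ge0.
  by apply: emeasurable_funD => //; apply: emeasurable_funM => //; exact: mwsq.
move=> z _; rewrite -!EFinM -EFinD lee_fin.
have -> : 2 * (w z.1 * (z.2 - a) ^+ 2) + c * w z.1
        = w z.1 * (2 * (z.2 - a) ^+ 2 + 2 * (a - b) ^+ 2) by rewrite /c; ring.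
by apply: ler_wpM2l; [exact: w_ge0 | exact: sqr_sub_le].
Qed.

Lemma wvar_sandwich p m m' : mu (B `*` setT) = p%:E -> 0 < p ->
  wmean mu \1_B = m%:E -> wmean mu w = m'%:E ->
  (wvar mu w <= (2 * (U / L))%:E * wvar mu \1_B + (2 * (m - m') ^+ 2)%:E)%E.
Proof.
move=> Bp p0 Em Em'; have [q wq /andP[Lpq _]] := wmass_sandwich Bp.
have U_gt0 : 0 < U := lt_le_trans L0 LU.
have := integral_sqr_dev_sandwich m m'.
rewrite /wvar Em Em' /= wq wmass_indic // Bp /=.
set V := (\int[mu]_(z in setT) (\1_B z.1 * (z.2 - m) ^+ 2)%:E)%E.
set K := (\int[mu]_(z in setT) (w z.1 * (z.2 - m') ^+ 2)%:E)%E.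
have V_ge0 : (0 <= V)%E by apply: integral_ge0 => z _; rewrite lee_fin mulr_ge0 ?sqr_ge0.
have K_ge0 : (0 <= K)%E.
  by apply: integral_ge0 => z _; rewrite lee_fin; apply: mulr_ge0; [exact: w_ge0 | exact: sqr_ge0].
move=> K_le; clearbody V K; case: V V_ge0 K_le => [v| |] // v0 K_le; last first.
  have UL_gt0 : 0 < 2 * (U / L) by rewrite mulr_gt0 ?divr_gt0.
  by rewrite mulry gtr0_sg ?invr_gt0 // mul1e mulry gtr0_sg // mul1e addye ?leey.
case: K K_ge0 K_le => [k| |] // _; rewrite -!EFinM -EFinD !lee_fin => k_le.
by rewrite lee_fin in v0; apply: normalized_dev_le k_le => //; exact: ltW.
Qed.

End sandwich.
End weighted_moments.

Section extended_process.
Context d (S : measurableType d) (R : realType) (M : nat) (S_ : 'I_M -> set S).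
Hypothesis mS : forall i, measurable (S_ i).
Variable Q : R -> R.-pker S ~> (S * R)%type.

Lemma Pk_EFin eps x B : measurable B -> Q eps x (B `*` setT) = (Pk Q eps x B)%:E.
Proof.
move=> mB; rewrite /Pk fineK // ge0_fin_numE //.
apply: (le_lt_trans (y := Q eps x setT)); last by rewrite prob_kernel ltry.
by apply: le_measure; rewrite ?inE //; exact: measurableX.
Qed.

Lemma measurable_wbar eps x b c k : measurable_fun setT (wbar Q S_ eps x b c k).
Proof.
apply: measurable_funM; first apply: measurable_funM.
- exact: measurable_cst.
- exact/measurable_indic/measurableI.
- exact: measurableT_comp (fine_measurable _)
    (measurable_kernel (Q eps) _ (measurableX (mS k) measurableT)).
Qed.

Lemma wbar_sandwich eps x b k del g : 0 < Pk Q eps x (S_ b) -> 0 < g ->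
  (forall y, S_ b y -> `|Pk Q eps y (S_ k) / g - 1| < del) ->
  forall y, (Pk Q eps x (S_ b))^-1 * g * (1 - del) * \1_(S_ b) y
            <= wbar Q S_ eps x b b k y
            <= (Pk Q eps x (S_ b))^-1 * g * (1 + del) * \1_(S_ b) y.
Proof.
move=> px g0 near_g y; rewrite /wbar setIid indicE.
have [yS | yNS] := pselect (S_ b y); last by rewrite memNset // !mulr0 mul0r lexx.
have /andP[lo hi] := near1_bounds g0 (near_g y yS).
by rewrite mem_set // !mulr1 -!mulrA !ler_pM2l ?invr_gt0 // lo hi.
Qed.

Lemma ETbar_ET_comparable eps x b k del g m :
  Q eps x (setT `*` `]-oo, 0[) = 0%E -> 0 < del < 1 ->
  0 < Pk Q eps x (S_ b) -> 0 < g ->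
  (forall y, S_ b y -> `|Pk Q eps y (S_ k) / g - 1| < del) ->
  ET Q eps x (S_ b) = m%:E ->
  exists2 m', ETbar Q S_ eps x b b k = m'%:E &
  [/\ 0 <= m, (1 - del) * m <= (1 + del) * m', (1 - del) * m' <= (1 + del) * m &
   (VarTbar Q S_ eps x b b k <= (2 * ((1 + del) / (1 - del)))%:E * VarT Q eps x (S_ b)
                               + (2 * (m - m') ^+ 2)%:E)%E].
Proof.
move=> Qt /andP[del0 del1] px g0 near_g Em.
have w_sandwich := wbar_sandwich px g0 near_g.
set q := (Pk Q eps x (S_ b))^-1 * g in w_sandwich.
have q0 : 0 < q by rewrite mulr_gt0 ?invr_gt0.
clearbody q.
have L0 : 0 < q * (1 - del) by rewrite mulr_gt0 // subr_gt0.
have LU : q * (1 - del) <= q * (1 + del) by rewrite ler_pM2l //; lra.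
have mw := measurable_wbar eps x b b k.
have Bp := Pk_EFin eps x (mS b).
have [m' Em' [m0 m_m' m'_m]] := wmean_sandwich Qt (mS b) mw L0 LU w_sandwich Bp px Em.
exists m' => //; split => //.
- by rewrite -!mulrA (ler_pM2l q0) in m_m'.
- by rewrite -!mulrA (ler_pM2l q0) in m'_m.
have -> : (1 + del) / (1 - del) = q * (1 + del) / (q * (1 - del)).
  by field; rewrite !gt_eqF ?subr_gt0.
exact: (wvar_sandwich (mu := Q eps x) (mS b) mw L0 LU w_sandwich Bp px Em Em').
Qed.

Hypothesis Q_time_ge0 : forall eps x, 0 < eps -> Q eps x (setT `*` `]-oo, 0[) = 0%E.

Section transition.
Variables (a b k : 'I_M) (g t : R -> R).
Hypothesis Pk_ab_gt0 : forall eps, 0 < eps -> forall x, S_ a x -> 0 < Pk Q eps x (S_ b).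
Hypothesis g_gt0 : forall eps, 0 < eps -> 0 < g eps.
Hypothesis Pk_bk_near : unif_ratio_to1R (fun eps y => Pk Q eps y (S_ k)) g (S_ b).
Hypothesis ET_ab_near : unif_ratio_to1 (fun eps x => ET Q eps x (S_ b)) t (S_ a).

Lemma ETbar_ET_eventually del : 0 < del < 1 ->
  exists2 eta, 0 < eta & forall eps, 0 < eps -> eps < eta -> forall x, S_ a x ->
  exists m m', [/\ ET Q eps x (S_ b) = m%:E, ETbar Q S_ eps x b b k = m'%:E,
    `|m / t eps - 1| < del,
    [/\ 0 <= m, (1 - del) * m <= (1 + del) * m' & (1 - del) * m' <= (1 + del) * m] &
    (VarTbar Q S_ eps x b b k <= (2 * ((1 + del) / (1 - del)))%:E * VarT Q eps x (S_ b)
                                + (2 * (m - m') ^+ 2)%:E)%E].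
Proof.
move=> /[dup] del01 /andP[del0 _].
have [eta_g [eta_g0 near_g]] := Pk_bk_near del0.
have [eta_t [eta_t0 near_t]] := ET_ab_near del0.
exists (Num.min eta_g eta_t); first by rewrite lt_min eta_g0 eta_t0.
move=> eps eps0; rewrite lt_min => /andP[eps_g eps_t] x Sa.
have [/fineK Em near_m] := near_t eps eps0 eps_t x Sa.
have [m' Em' [m0 m_m' m'_m VarTbar_le]] := ETbar_ET_comparable (Q_time_ge0 x eps0) del01
  (Pk_ab_gt0 eps0 Sa) (g_gt0 eps0) (near_g eps eps0 eps_g) (esym Em).
by exists (fine (ET Q eps x (S_ b))), m'.
Qed.

Lemma ETbar_ratio_to1 : unif_ratio_to1 (fun eps x => ETbar Q S_ eps x b b k) t (S_ a).
Proof.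
move=> e e0; pose del := Num.min e 1 / 8.
have del0 : 0 < del by rewrite divr_gt0 // lt_min e0 ltr01.
have del8 : 8 * del <= 1 by rewrite mulrC divfK ?pnatr_eq0 // ge_min lexx orbT.
have del01 : 0 < del < 1 by rewrite del0 /=; lra.
have [eta eta0 near_ETbar] := ETbar_ET_eventually del01.
exists eta; split => // eps eps0 eps_eta x Sa.
have [m [m' [_ -> near_m [m0 m_m' m'_m] _]]] := near_ETbar eps eps0 eps_eta x Sa.
split => //; apply: lt_le_trans (comparable_near1 del0 del8 m0 m_m' m'_m near_m) _.
by rewrite /del mulrC divfK ?pnatr_eq0 // ge_min lexx.
Qed.

Lemma VarTbar_le_sqr :
  (exists C eps0, 0 < eps0 /\ forall eps, 0 < eps -> eps <= eps0 -> forall x, S_ a x ->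
     (VarT Q eps x (S_ b) <= (C * t eps ^+ 2)%:E)%E) ->
  exists C eps0, 0 < C /\ 0 < eps0 /\ forall eps, 0 < eps -> eps <= eps0 ->
    forall x, S_ a x -> (VarTbar Q S_ eps x b b k <= (C * t eps ^+ 2)%:E)%E.
Proof.
move=> [C [eps0 [eps00 VarT_le]]].
have half : 0 < (2^-1 : R) < 1 by rewrite invr_gt0 invf_lt1 ?ltr0n ?ltr1n.
have [eta eta0 near_ETbar] := ETbar_ET_eventually half.
have C0 : 0 <= Num.max C 0 by rewrite le_max lexx orbT.
(* With del = 1/2: 2 (1 + del)/(1 - del) = 6 and (m - m')^2 <= 9 t^2. *)
exists (6 * Num.max C 0 + 18), (Num.min (eta / 2) eps0).
split; first by lra.
split=> [|eps eps_gt0]; first by rewrite lt_min eps00 divr_gt0.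
rewrite le_min => /andP[eps_eta eps_eps0] x Sa.
have eps_lt_eta : eps < eta by lra.
have [m [m' [_ _ near_m [m0 m_m' m'_m] VarTbar_le]]] := near_ETbar eps eps_gt0 eps_lt_eta x Sa.
have [half0 _] := andP half.
have half_le : 2 * (2^-1 : R) <= 1 by rewrite mulfV ?pnatr_eq0.
have dev_le := sqr_sub_le_comparable half0 half_le m0 m_m' m'_m near_m.
apply: (le_trans VarTbar_le).
have -> : 2 * ((1 + 2^-1) / (1 - 2^-1)) = 6 :> R by field.
apply: (le_trans (leeD2r _ (lee_wpmul2l _ (VarT_le eps eps_gt0 eps_eps0 x Sa)))) => //.
rewrite -EFinM -EFinD lee_fin.
have : C <= Num.max C 0 by rewrite le_max lexx.
have := sqr_ge0 (t eps); nra.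
Qed.

End transition.

End extended_process.

Theorem lemma4p1 (d : measure_display) (S : measurableType d) (R : realType)
  (M : nat) (S_ : 'I_M -> set S)
  (mS : forall i, measurable (S_ i))
  (disjS : forall i j, i <> j -> S_ i `&` S_ j = set0)
  (coverS : forall x, exists i, S_ i x)
  (Q : R -> R.-pker S ~> (S * R)%type)
  (Qtime : forall eps x, 0 < eps -> Q eps x (setT `*` `]-oo, 0[) = 0%E)
  (Pm : R -> 'I_M -> 'I_M -> R) (tau : R -> 'I_M -> 'I_M -> R)
  (* (i) *)
  (h_i : forall eps i x, 0 < eps -> S_ i x -> Pk Q eps x (S_ i) = 0)
  (* (ii) *)
  (h_ii : forall i j, i <> j ->
     (forall eps, 0 < eps ->
        (forall x, S_ i x -> Pk Q eps x (S_ j) = 0) /\ Pm eps i j = 0)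
     \/
     ((forall eps, 0 < eps ->
        (forall x, S_ i x -> 0 < Pk Q eps x (S_ j)) /\ 0 < Pm eps i j) /\
      unif_ratio_to1R (fun eps x => Pk Q eps x (S_ j))
                      (fun eps => Pm eps i j) (S_ i)))
  (h_ii_sum : forall eps i, 0 < eps -> \sum_(j | j != i) Pm eps i j = 1)
  (* (iii) *)
  (h_iii : forall i j, i <> j -> exists (k : nat) (f : nat -> 'I_M),
     f 0%N = i /\ f k = j /\ forall r, (r < k)%N -> nz Pm (f r) (f r.+1))
  (* (iv) *)
  (h_iv : forall i j, nz Pm i j ->
     unif_ratio_to1 (fun eps x => ET Q eps x (S_ j))
                    (fun eps => tau eps i j) (S_ i))
  (* (v) *)
  (h_v : forall i j, nz Pm i j -> exists (C eps0 : R), 0 < eps0 /\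
     forall eps, 0 < eps -> eps <= eps0 -> forall x, S_ i x ->
       (VarT Q eps x (S_ j) <= (C * tau eps i j ^+ 2)%:E)%E) :
  (* extended states S_a x {b} with nz a b; targets S_c x {k} with
     Pbar_{(a,b),(c,k)} not identically 0, i.e. b = c and nz c k *)
  exists taubar : R -> 'I_M -> 'I_M -> R,
    (forall a b c k, nz Pm a b -> b = c -> nz Pm c k ->
       unif_ratio_to1 (fun eps x => ETbar Q S_ eps x b c k)
                      (fun eps => taubar eps a b) (S_ a)) /\
    exists (C eps0 : R), 0 < C /\ 0 < eps0 /\
      forall a b c k, nz Pm a b -> b = c -> nz Pm c k ->
      forall eps, 0 < eps -> eps <= eps0 -> forall x, S_ a x ->
        (VarTbar Q S_ eps x b c k <= (C * taubar eps a b ^+ 2)%:E)%E.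
Proof.
have nz_transition i j : nz Pm i j ->
  [/\ forall eps, 0 < eps -> forall x, S_ i x -> 0 < Pk Q eps x (S_ j),
      forall eps, 0 < eps -> 0 < Pm eps i j &
      unif_ratio_to1R (fun eps x => Pk Q eps x (S_ j)) (fun eps => Pm eps i j) (S_ i)].
  move=> [ij Pm_nz]; case: (h_ii i j ij) => [Pm0|[Pk_pos near]].
    by exfalso; apply: Pm_nz => eps eps0; case: (Pm0 eps eps0).
  by split=> // eps eps0; [case: (Pk_pos eps eps0) | case: (Pk_pos eps eps0)].
exists tau; split.
  move=> a b _ k nab <- nbk.
  have [Pab _ _] := nz_transition a b nab; have [_ Pbk near_bk] := nz_transition b k nbk.
  exact: (ETbar_ratio_to1 (g := fun eps => Pm eps b k) mS Qtime Pab Pbk near_bk (h_iv a b nab)).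
pose P (abk : 'I_M * 'I_M * 'I_M) C eps0 := let: (a, b, k) := abk in
  nz Pm a b -> nz Pm b k -> forall eps, 0 < eps -> eps <= eps0 -> forall x, S_ a x ->
    (VarTbar Q S_ eps x b b k <= (C * tau eps a b ^+ 2)%:E)%E.
have [[[a b] k] C C' e e' CC' _ e'e P_Ce nab nbk eps eps0 eps_e' x Sa|[[a b] k]|] :=
  finite_uniform_bound (P := P).
- apply: le_trans (P_Ce nab nbk eps eps0 (le_trans eps_e' e'e) x Sa) _.
  by rewrite lee_fin ler_wpM2r ?sqr_ge0.
- have [[nab nbk]|not_nz] := pselect (nz Pm a b /\ nz Pm b k); last first.
    by exists 1, 1; do 2 split=> //; move=> nab nbk; exfalso; exact: not_nz.
  have [Pab _ _] := nz_transition a b nab; have [_ Pbk near_bk] := nz_transition b k nbk.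
  have [C [e [C0 [e0 VarTbar_le]]]] :=
    VarTbar_le_sqr mS Qtime Pab Pbk near_bk (h_iv a b nab) (h_v a b nab).
  by exists C, e; do 2 split=> //; move=> _ _.
move=> C [e [C0 [e0 VarTbar_le]]]; exists C, e; do 2 split=> //.
by move=> a b _ k nab <- nbk; exact: (VarTbar_le (a, b, k)).
Qed.
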